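(* Let $(X,\|\cdot\|_X)$ be a normed linear space and $(Y,d_Y)$ a metric space. If there exists a map $f\colon X\to Y$ such that $\lim_{t\to\infty}\rho_f(t)=\infty$, then $\mathrm{dens}(X)\leq\mathrm{dens}(Y)$.
   Context: $\rho_f(t)=\inf\{d_Y(f(x_1),f(x_2)): \|x_1-x_2\|_X\geq t\}$ is the modulus of compression of $f$. $\mathrm{dens}(Z)$ denotes the density character of a metric space $Z$, the smallest cardinality of a dense subset. *)

From HB Require Import structures.
From mathcomp Require Import all_boot all_order all_algebra.
From mathcomp Require Import all_classical all_reals all_analysis.
Set Implicit Arguments. Unset Strict Implicit. Unset Printing Implicit Defensive.
Import Order.TTheory GRing.Theory Num.Theory.
Import numFieldNormedType.Exports.
Local Open Scope classical_set_scope.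
Local Open Scope ring_scope.

Definition is_metric (R : realType) (Y : Type) (d : Y -> Y -> R) : Prop :=
  [/\ (forall x y, 0 <= d x y),
      (forall x y, d x y = 0 <-> x = y),
      (forall x y, d x y = d y x) &
      (forall x y z, d x z <= d x y + d y z)].

Definition metric_dense (R : realType) (T : Type) (d : T -> T -> R) (D : set T)
  : Prop :=
  forall (y : T) (e : R), 0 < e -> exists2 z, D z & d y z < e.

Definition norm_dist (R : realType) (X : normedModType R) (x y : X) : R :=
  `|x - y|.

(* dens(X) <= dens(Y): the least cardinality of a dense subset of X is at most
   the least cardinality of a dense subset of Y, i.e. every dense subset D of Y
   dominates (in cardinality) some dense subset E of X. *)
Definition dens_le (R : realType) (X : Type) (dX : X -> X -> R)
  (Y : Type) (dY : Y -> Y -> R) : Prop :=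
  forall D : set Y, metric_dense dY D ->
    exists E : set X, metric_dense dX E /\ (E #<= D)%card.

(* modulus of compression
   rho_f(t) = inf { d_Y(f x1, f x2) : ||x1 - x2|| >= t }, in the extended reals
   (inf of the empty set is +oo). *)
Definition compression_modulus (R : realType) (X : normedModType R)
  (Y : Type) (dY : Y -> Y -> R) (f : X -> Y) (t : R) : \bar R :=
  ereal_inf [set z : \bar R | exists x1 x2 : X,
      t <= `|x1 - x2| /\ z = (dY (f x1) (f x2))%:E].

From HB Require Import structures.
From mathcomp Require Import all_boot all_order all_algebra.
From mathcomp Require Import all_classical all_reals all_analysis.
From mathcomp Require Import lra.
Set Implicit Arguments. Unset Strict Implicit. Unset Printing Implicit Defensive.
Import Order.TTheory GRing.Theory Num.Theory.
Import numFieldNormedType.Exports.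
Local Open Scope classical_set_scope.
Local Open Scope ring_scope.

(* Since rho_f tends to +oo, points whose images are 2-close are T-close for
   some T, and after rescaling X we may take T = 1.  Fix a unit vector v and
   put stretch n x = (n+1) x + (n+1)^3 v.  The cubic offsets keep the images
   of the balls B(0, n+1) under different stretch n at mutual distance >= 1,
   so for each y of a dense set D of Y at most one level n has a point z of
   B(0, n+1) with g (stretch n z) within 1 of y; choosing such a z defines a
   map D -> X.  Its image is dense: any x lies in some B(0, n+1), and the
   point chosen at that level is within 1/(n+1) of x, because stretch n
   multiplies distances by n+1. *)

Lemma dens_le_image (R : realType) (X Y : Type) (dX : X -> X -> R)
    (dY : Y -> Y -> R) :
  (forall D : set Y, metric_dense dY D ->
     exists h : Y -> X, metric_dense dX (h @` D)) ->
  dens_le dX dY.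
Proof.
move=> dense_image D /dense_image[h hD].
by exists (h @` D); split=> //; exact: card_image_le.
Qed.

Section CompressionModulus.
Variables (R : realType) (X : normedModType R) (Y : Type).
Variables (dY : Y -> Y -> R) (f : X -> Y).

Lemma compression_modulus_le t x1 x2 : t <= `|x1 - x2| ->
  (compression_modulus dY f t <= (dY (f x1) (f x2))%:E)%E.
Proof. by move=> tx; apply: ereal_inf_lbound; exists x1, x2. Qed.

Lemma compression_modulus_cvgey_bound :
    compression_modulus dY f t @[t --> +oo] --> +oo%E ->
  forall r, exists2 T, 0 < T &
    forall p q, dY (f p) (f q) < r -> `|p - q| < T.
Proof.
move=> /cvgeyPgt rho_oo r; have [M [M_real rhoM]] := rho_oo r.
exists (`|M| + 1) => [|p q pq]; first by rewrite ltr_pwDr.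
rewrite ltNge; apply/negP => /compression_modulus_le.
have /rhoM /lt_le_trans rM : M < `|M| + 1.
  by rewrite (le_lt_trans (real_ler_norm M_real)) // ltrDl.
by move=> /rM; rewrite lte_fin ltNge (ltW pq).
Qed.

End CompressionModulus.

Section Stretch.
Variables (R : realType) (X : normedModType R) (v : X).
Hypothesis v1 : `|v| = 1.

Definition stretch (n : nat) (x : X) : X :=
  n.+1%:R *: x + n.+1%:R ^+ 3 *: v.

Lemma stretchB n x z : stretch n x - stretch n z = n.+1%:R *: (x - z).
Proof. by rewrite /stretch opprD addrACA subrr addr0 scalerBr. Qed.

Lemma stretch_sep n m x x' : (n < m)%N ->
  `|x| < n.+1%:R -> `|x'| < m.+1%:R -> 1 <= `|stretch m x' - stretch n x|.
Proof.
move=> nm; set k : R := n.+1%:R; set K : R := m.+1%:R => xk x'K.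
have k1 : 1 <= k by rewrite ler1n.
have kK : k + 1 <= K by rewrite /k /K natr1 ler_nat.
have -> : stretch m x' - stretch n x =
    (K ^+ 3 - k ^+ 3) *: v + (K *: x' - k *: x).
  by rewrite /stretch opprD addrACA addrC scalerBl.
apply: le_trans (lerB_normD _ _).
have Kx'_kx : `|K *: x' - k *: x| < K * K + k * k.
  apply: le_lt_trans (ler_normB _ _) _.
  rewrite !normrZ !ger0_norm ?ler0n //.
  by apply: ltrD; rewrite ltr_pM2l ?ltr0Sn.
have cube_gap : (K - k - 1) * (K ^+ 2 + K * k + k ^+ 2) >= 0.
  by apply: mulr_ge0; nra.
rewrite normrZ v1 mulr1 ger0_norm; nra.
Qed.

End Stretch.

Section DenseImage.
Variables (R : realType) (X : normedModType R) (Y : Type) (dY : Y -> Y -> R).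
Hypothesis dY_metric : is_metric dY.
Variable g : X -> Y.
Hypothesis g_coarse_inj : forall p q, dY (g p) (g q) < 2 -> `|p - q| < 1.
Variable v : X.
Hypothesis v1 : `|v| = 1.

Definition preball (n : nat) (y : Y) : set X :=
  [set z | `|z| < n.+1%:R /\ dY (g (stretch v n z)) y < 1].

Lemma preball_close n m y z z' : preball n y z -> preball m y z' ->
  `|stretch v n z - stretch v m z'| < 1.
Proof.
case: dY_metric => _ _ dC dT [_ zy] [_ z'y]; apply: g_coarse_inj.
by apply: le_lt_trans (dT _ y _) _; rewrite (dC y); lra.
Qed.

Lemma preball_level_unique n m y z z' : preball n y z -> preball m y z' ->
  n = m.
Proof.
wlog nm : n m z z' / (n < m)%N => [wlog_nm yz yz'|[zn zy] [z'm z'y]].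
  case: (ltngtP n m) => [nm|mn|//]; first exact: wlog_nm nm yz yz'.
  by rewrite (wlog_nm _ _ _ _ mn yz' yz).
have := stretch_sep v1 nm zn z'm.
by rewrite leNgt distrC (preball_close (conj zn zy) (conj z'm z'y)).
Qed.

Definition level (y : Y) : nat := xget 0%N [set n | exists z, preball n y z].

Definition pick (y : Y) : X := xget 0 (preball (level y) y).

Lemma preball_pick n y z : preball n y z -> preball n y (pick y).
Proof.
move=> yz; have [z' yz'] : exists z', preball (level y) y z'.
  by apply: (@xgetPex _ 0%N [set n | exists z, preball n y z]); exists n, z.
rewrite -(preball_level_unique yz' yz).
by apply: xgetPex; exists z'.
Qed.

Lemma pick_dense D : metric_dense dY D ->
  metric_dense (@norm_dist R X) (pick @` D).
Proof.
move=> D_dense x e e0; have ei : 0 < e^-1 by rewrite invr_gt0.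
have [n xe] : exists n, `|x| + e^-1 < n.+1%:R.
  exists (Num.bound (`|x| + e^-1)); apply: lt_le_trans (archi_boundP _) _.
    by rewrite addr_ge0 // ltW.
  by rewrite ler_nat.
have [y Dy xy] := D_dense (g (stretch v n x)) 1 ltr01.
have yx : preball n y x by split=> //; lra.
exists (pick y); first by exists y.
have := preball_close yx (preball_pick yx).
rewrite stretchB normrZ ger0_norm // /norm_dist.
have e_inv : 1 < e * n.+1%:R.
  have := mulfV (lt0r_neq0 e0); have := normr_ge0 x; nra.
have := normr_ge0 (x - pick y); nra.
Qed.

End DenseImage.

Theorem lemma2p1 (R : realType) (X : normedModType R) (Y : Type)
  (dY : Y -> Y -> R) (hY : is_metric dY) :
  (exists f : X -> Y,
      compression_modulus dY f t @[t --> +oo] --> +oo%E) ->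
  dens_le (@norm_dist R X) dY.
Proof.
move=> [f /compression_modulus_cvgey_bound/(_ 2)[T T0 fT]].
apply: dens_le_image => D D_dense.
case: (pselect (exists w : X, w != 0)) => [[w w0]|X0].
  pose g x := f (T *: x).
  have g_coarse_inj p q : dY (g p) (g q) < 2 -> `|p - q| < 1.
    by move/fT; rewrite -scalerBr normrZ gtr0_norm // gtr_pMr.
  have := pick_dense hY g_coarse_inj (normfZV w0) D_dense.
  by exists (pick dY g (`|w|^-1 *: w)).
have [y Dy _] := D_dense (f 0) 1 ltr01.
exists (fun=> 0) => x e e0; exists 0; first by exists y.
have -> : x = 0 by apply: contra_notP X0 => /eqP x0; exists x.
by rewrite /norm_dist subr0 normr0.
Qed.
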